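(* Consider the click-through auction setting with $n\ge 2$ bidders, all with the same value $v_i=v\ge 0$. Suppose the CTR vector is uniformly distributed over two profiles $r,r'\in[0,1]^n$ for which there are two bidders $i\neq j$ such that $r_i=r'_j>r_j=r'_i\ge r_k$ and $r_i=r'_j>r_j=r'_i\ge r'_k$ for every $k\notin\{i,j\}$. Then for every $\varepsilon>0$ there is a calibrated, correlated information structure whose revenue is at least $vr_i-\varepsilon$.
   Context: Setting. There are $n$ bidders; bidder $i$ has known value per click $v_i$. The CTR vector $r\in[0,1]^n$ is drawn from a prior $G$ with finite support. An information structure is a probability distribution with finite support on pairs $(r,s)\in[0,1]^n\times[0,1]^n$ whose $r$-marginal is $G$. Given signals $s$, the winner $i^*$ maximizes $v_is_i$ (uniform tie-breaking), pays per click $p_{i^*}=\max_{j\ne i^*}v_js_j/s_{i^*}$ (revenue $0$ if $s_{i^*}=0$), only upon a click, which occurs with probability $r_{i^*}$; revenue is $\mathbb{E}[r_{i^*}p_{i^*}]$. Calibrated: $\mathbb{E}[r_i\mid s_i=t]=t$ for every $i$ and every $t$ with $\Pr[s_i=t]>0$. Correlated: not independent, where independent means $\mathbb{E}[r_i\mid s]=\mathbb{E}[r_i\mid s_i]$ for all $i$ and all $s$ in the support. *)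

From HB Require Import structures.
From mathcomp Require Import all_boot all_order all_algebra.
From mathcomp Require Import reals.
Set Implicit Arguments. Unset Strict Implicit. Unset Printing Implicit Defensive.
Import Order.TTheory GRing.Theory Num.Theory.
Local Open Scope ring_scope.

Section ClickAuction.
Variables (R : realType) (n : nat).

Notation vec := {ffun 'I_n -> R}.

(* An atom (p, (r, s)) of a finite-support distribution: weight p, CTR
   vector r, signal vector s. *)
Definition atom := (R * (vec * vec))%type.
Definition weight (a : atom) : R := a.1.
Definition ctr (a : atom) : vec := a.2.1.
Definition sig (a : atom) : vec := a.2.2.

Definition in01 (x : vec) : Prop := forall k, 0 <= x k <= 1.

Definition unif2 (r r' : vec) (x : vec) : R :=
  (if x == r then 1 / 2 else 0) + (if x == r' then 1 / 2 else 0).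

(* I (a finite list of atoms with positive weights, duplicates allowed) is an
   information structure on [0,1]^n x [0,1]^n whose r-marginal is G. *)
Definition is_info_struct (G : vec -> R) (I : seq atom) : Prop :=
  [/\ forall a, a \in I -> [/\ 0 < weight a, in01 (ctr a) & in01 (sig a)],
      \sum_(a <- I) weight a = 1
    & forall x : vec, \sum_(a <- I | ctr a == x) weight a = G x].

Definition prob_sk (I : seq atom) (k : 'I_n) (t : R) : R :=
  \sum_(a <- I | sig a k == t) weight a.
Definition condE_sk (I : seq atom) (k : 'I_n) (t : R) : R :=
  (\sum_(a <- I | sig a k == t) weight a * ctr a k) / prob_sk I k t.

Definition prob_s (I : seq atom) (σ : vec) : R :=
  \sum_(a <- I | sig a == σ) weight a.
Definition condE_s (I : seq atom) (k : 'I_n) (σ : vec) : R :=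
  (\sum_(a <- I | sig a == σ) weight a * ctr a k) / prob_s I σ.

Definition calibrated (I : seq atom) : Prop :=
  forall (k : 'I_n) (t : R), 0 < prob_sk I k t -> condE_sk I k t = t.

(* σ is in the support of the signal distribution (all weights are > 0). *)
Definition in_support (I : seq atom) (σ : vec) : bool :=
  has (fun a => sig a == σ) I.

Definition independent (I : seq atom) : Prop :=
  forall (k : 'I_n) (σ : vec), in_support I σ ->
    condE_s I k σ = condE_sk I k (σ k).

Definition correlated (I : seq atom) : Prop := ~ independent I.

Definition winners (v : 'I_n -> R) (σ : vec) : {set 'I_n} :=
  [set k | [forall l, v l * σ l <= v k * σ k]].

(* Price per click of bidder k when winning: max_{l <> k} v_l σ_l / σ_k,
   and 0 if σ_k = 0. (Bids v_l σ_l are >= 0, so 0 is a neutral start.) *)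
Definition price (v : 'I_n -> R) (σ : vec) (k : 'I_n) : R :=
  if σ k == 0 then 0
  else (\big[Num.max/0]_(l | l != k) (v l * σ l)) / σ k.

(* Expected revenue given CTR vector r and signals σ, averaging over the
   uniform tie-breaking: E[r_{i*} p_{i*}]. *)
Definition rev_given (v : 'I_n -> R) (r σ : vec) : R :=
  (#|winners v σ|%:R)^-1 * \sum_(k in winners v σ) r k * price v σ k.

Definition revenue (v : 'I_n -> R) (I : seq atom) : R :=
  \sum_(a <- I) weight a * rev_given v (ctr a) (sig a).

End ClickAuction.

From HB Require Import structures.
From mathcomp Require Import all_boot all_order all_algebra.
From mathcomp Require Import reals.
From mathcomp Require Import ring lra.
Import Order.TTheory GRing.Theory Num.Theory.
Local Open Scope ring_scope.
Set Implicit Arguments. Unset Strict Implicit. Unset Printing Implicit Defensive.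

(* Write a = r i = r' j > b = r j = r' i.  For a parameter M we build a
   "binomial ladder": the grid u_l = b + (a - b) l / (M + 1), l = 0..M+1,
   and, for each rung m = 0..M, two atoms of weight C(M, m) / 2^(M+1):
   profile r with signals (s_i, s_j) = (u_(m+1), u_m), and profile r' with
   (s_i, s_j) = (u_m, u_(m+1)); other bidders get their mean CTR.
   - Weights sum to 1/2 per profile, so the CTR marginal is uniform.
   - Calibration reduces to the binomial identity
     C(M, m) (a - u_(m+1)) = C(M, m+1) (u_(m+1) - b).
   - For M > 0 the structure is correlated: at the top rung of profile r,
     E[r_j | s] = b but E[r_j | s_j] = s_j = u_M > b.
   - The high-signal bidder always wins, has CTR a, and pays v u_m / u_(m+1)
     per click; since u_m / u_(m+1) >= 1 - 1/(m+1) and the weights average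
     1/(m+1) to at most 1/(M+1), revenue is at least a v (1 - 2/(M+1)). *)

Section Grid.
Variables (R : realFieldType) (a b : R) (M : nat).

Definition grid (l : nat) : R := b + (a - b) * l%:R / M.+1%:R.

Lemma grid0 : grid 0 = b.
Proof. by rewrite /grid mulr0 mul0r addr0. Qed.

Lemma grid_top : grid M.+1 = a.
Proof. by rewrite /grid mulfK ?pnatr_eq0 // addrC subrK. Qed.

Hypothesis ba : b < a.

Lemma grid_lt l l' : (l < l')%N -> grid l < grid l'.
Proof.
move=> ll'; rewrite /grid ltrD2l ltr_pM2r ?invr_gt0 ?ltr0n //.
by rewrite ltr_pM2l ?subr_gt0 // ltr_nat.
Qed.

Lemma grid_le l l' : (l <= l')%N -> grid l <= grid l'.
Proof. by rewrite leq_eqVlt => /predU1P [-> // | /grid_lt /ltW]. Qed.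

Lemma grid_ge_bot l : b <= grid l.
Proof. by rewrite -{1}grid0 grid_le. Qed.

Lemma grid_le_top l : (l <= M.+1)%N -> grid l <= a.
Proof. by move=> /grid_le; rewrite grid_top. Qed.

Lemma grid_ratio m : 0 <= b -> 1 - 1 / m.+1%:R <= grid m / grid m.+1.
Proof.
move=> b0; have g_gt0 : 0 < grid m.+1 by apply: le_lt_trans b0 _; rewrite -grid0 grid_lt.
rewrite ler_pdivlMr // /grid -[m.+1%:R]natr1.
set k : R := m%:R; set N : R := M.+1%:R.
have k0 : 0 <= k by rewrite /k ler0n.
have N0 : 0 < N by rewrite /N ltr0n.
have -> : (1 - 1 / (k + 1)) * (b + (a - b) * (k + 1) / N)
          = b + (a - b) * k / N - b / (k + 1).
  by field; rewrite /N nat1r pnatr_eq0 gt_eqF //; lra.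
rewrite lerBlDr lerDl divr_ge0 //; lra.
Qed.

End Grid.

(* The weights C(M, m) / 2^(M+1): half of the binomial(M, 1/2) law. *)
Section BinomialWeights.
Variables (R : realFieldType) (M : nat).

Definition binw (m : nat) : R := 'C(M, m)%:R / 2 ^+ M.+1.

Lemma binw_ge0 m : 0 <= binw m.
Proof. by rewrite /binw divr_ge0 ?exprn_ge0 ?ler0n. Qed.

Lemma binw_gt0 m : (m <= M)%N -> 0 < binw m.
Proof. by move=> mM; rewrite /binw divr_gt0 ?exprn_gt0 // ltr0n bin_gt0. Qed.

Lemma sum_binw : \sum_(m < M.+1) binw m = 1 / 2.
Proof.
rewrite /binw -mulr_suml; have := exprD1n (1 : R) M.
under eq_bigr do rewrite expr1n.
move=> <-; rewrite (_ : 1 + 1 = 2 :> R) // exprS.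
by field; rewrite expf_neq0 // pnatr_eq0.
Qed.

(* Averaging 1/(m+1) against binomial weights gives at most 1/(M+1),
   because C(M, m) / (m+1) = C(M+1, m+1) / (M+1). *)
Lemma sum_binw_div : \sum_(m < M.+1) binw m / m.+1%:R <= 1 / M.+1%:R.
Proof.
have shift m : binw m / m.+1%:R = 'C(M.+1, m.+1)%:R / (M.+1%:R * 2 ^+ M.+1).
  have -> : 'C(M.+1, m.+1)%:R = M.+1%:R * 'C(M, m)%:R / m.+1%:R :> R.
    by rewrite -natrM (mul_bin_diag M.+1) natrM mulrC mulKf ?pnatr_eq0.
  by rewrite /binw; field; rewrite !nat1r !pnatr_eq0 expf_neq0 // pnatr_eq0.
under eq_bigr do rewrite shift; rewrite -mulr_suml.
have sum_le : \sum_(m < M.+1) 'C(M.+1, m.+1)%:R <= (2 : R) ^+ M.+1.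
  have := exprD1n (1 : R) M.+1 => ->; rewrite [X in _ <= X]big_ord_recl /=.
  under [X in _ <= _ + X]eq_bigr do rewrite expr1n.
  by rewrite lerDr ler0n.
rewrite ler_pdivrMr ?mulr_gt0 ?exprn_gt0 ?ltr0n // mulrA mul1r.
by rewrite mulVf ?pnatr_eq0 // mul1r.
Qed.

End BinomialWeights.

Section GridWeights.
Variables (R : realFieldType) (a b : R) (M : nat).
Local Notation u := (grid a b M).
Local Notation w := (binw R M).

(* The binomial identity behind calibration: the mass of the two atoms
   sharing the grid value u_(m+1) is balanced around it. *)
Lemma binw_balance m : (m < M)%N -> w m * (a - u m.+1) + w m.+1 * (b - u m.+1) = 0.
Proof.
move=> mM.
have bin_rec : m.+1%:R * 'C(M, m.+1)%:R = (M%:R - m%:R) * 'C(M, m)%:R :> R.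
  by rewrite -natrM mul_bin_left natrM natrB // ltnW.
rewrite /binw /grid -[m.+1%:R]natr1 -[M.+1%:R]natr1 in bin_rec *.
transitivity ((a - b) / (2 ^+ M.+1 * (M%:R + 1))
              * ('C(M, m)%:R * (M%:R - m%:R) - 'C(M, m.+1)%:R * (m%:R + 1))).
  by field; rewrite natr1 pnatr_eq0 expf_neq0 // pnatr_eq0.
by rewrite [_ * (m%:R + 1)]mulrC bin_rec [(M%:R - _) * _]mulrC subrr mulr0.
Qed.

(* Conditional on any signal value t, a bidder whose signal is u_(m+1)
   on CTR a (weight w m) or u_m on CTR b (weight w m) has mean CTR t. *)
Lemma grid_martingale t :
  \sum_(m < M.+1) ((if u m.+1 == t then w m * (a - u m.+1) else 0)
                   + (if u m == t then w m * (b - u m) else 0)) = 0.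
Proof.
rewrite big_split /= big_ord_recr big_ord_recl /= grid_top grid0 !subrr !mulr0.
rewrite !if_same addr0 add0r -big_split /=.
apply: big1 => m _; rewrite /bump /=.
by case: ifP => _; [exact: binw_balance | rewrite addr0].
Qed.

Lemma expected_grid_ratio : 0 <= b -> b < a ->
  1 / 2 - 1 / M.+1%:R <= \sum_(m < M.+1) w m * (u m / u m.+1).
Proof.
move=> b0 ba.
apply: le_trans (_ : \sum_(m < M.+1) w m * (1 - 1 / m.+1%:R) <= _); last first.
  by apply: ler_sum => m _; rewrite ler_wpM2l ?binw_ge0 ?grid_ratio.
under eq_bigr do rewrite mulrBr mulr1 mul1r.
by rewrite sumrB sum_binw lerB // sum_binw_div.
Qed.

End GridWeights.

Section InfoStructureFacts.
Variables (R : realType) (n : nat).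
Implicit Types (I : seq (atom R n)) (ρ σ : {ffun 'I_n -> R}).

Lemma cond_mass_gt0 I (P : pred (atom R n)) x :
  (forall y, y \in I -> 0 < weight y) -> x \in I -> P x ->
  0 < \sum_(y <- I | P y) weight y.
Proof.
move=> w_gt0 xI Px; rewrite (big_rem x xI) Px /=.
apply: lt_le_trans (w_gt0 x xI) _; rewrite lerDl big_seq_cond sumr_ge0 //.
by move=> y /andP [/mem_rem yI _]; exact/ltW/w_gt0.
Qed.

Lemma condE_sk_fixed I k t :
  \sum_(x <- I | sig x k == t) weight x * (ctr x k - sig x k) = 0 ->
  0 < prob_sk I k t -> condE_sk I k t = t.
Proof.
move=> centered pos; rewrite /condE_sk.
rewrite (eq_bigr (fun x => weight x * (ctr x k - sig x k) + weight x * t)); last first.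
  by move=> x /eqP ->; rewrite -mulrDr subrK.
by rewrite big_split /= centered add0r -mulr_suml mulrC mulKf // gt_eqF.
Qed.

Lemma condE_s_const I k σ c :
  (forall x, x \in I -> sig x = σ -> ctr x k = c) -> 0 < prob_s I σ ->
  condE_s I k σ = c.
Proof.
move=> const pos; rewrite /condE_s /prob_s big_seq_cond.
under eq_bigr => x /andP [xI /eqP sx] do rewrite (const x xI sx) mulrC.
by rewrite -mulr_sumr -big_seq_cond mulfK // gt_eqF.
Qed.

Lemma rev_given_top (v : R) ρ σ p q :
  0 <= v -> p != q -> 0 <= σ q -> σ q < σ p ->
  (forall l, l != p -> l != q -> σ l <= σ q) ->
  rev_given (fun _ => v) ρ σ = ρ p * (v * σ q / σ p).
Proof.
move=> v0 pq sq0 sqp others.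
have sp0 : σ p != 0 by rewrite gt_eqF // (le_lt_trans sq0).
have [v_eq0 | v_neq0] := eqVneq v 0.
  rewrite v_eq0 /rev_given big1 ?(mulr0, mul0r) // => k _.
  rewrite /price; case: ifP => _; first by rewrite mulr0.
  rewrite big1_idem ?mul0r ?mulr0 //; first exact: maxxx.
  by move=> l _; rewrite mul0r.
have v_gt0 : 0 < v by rewrite lt_def v_neq0.
have below_q l : l != p -> σ l <= σ q.
  by move=> lp; have [-> // | lq] := eqVneq l q; exact: others.
have win : winners (fun _ => v) σ = [set p].
  apply/setP => k; rewrite !inE; have [-> | kp] := eqVneq k p.
    apply/forallP => l; rewrite ler_pM2l //.
    by have [-> // | lp] := eqVneq l p; rewrite (le_trans (below_q l lp)) ?ltW.
  apply/negbTE/negP => /forallP /(_ p); rewrite ler_pM2l // leNgt.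
  by rewrite (le_lt_trans (below_q k kp)).
rewrite /rev_given win cards1 invr1 mul1r big_set1 /price (negbTE sp0).
congr (_ * (_ / _)); apply/le_anti/andP; split.
  by apply: bigmax_le => [|l lp]; rewrite ?mulr_ge0 // ler_wpM2l ?below_q.
by apply: (bigmax_sup q); rewrite // eq_sym.
Qed.

End InfoStructureFacts.

Section Ladder.
Variables (R : realType) (n : nat) (i j : 'I_n) (r r' : {ffun 'I_n -> R}).
Variables (a b : R) (M : nat).
Hypotheses (ij : i != j) (ri : r i = a) (r'j : r' j = a) (rj : r j = b) (r'i : r' i = b).
Hypotheses (ba : b < a) (r01 : in01 r) (r'01 : in01 r').
Hypothesis others : forall k, k != i -> k != j -> r k <= b /\ r' k <= b.

Local Notation u := (grid a b M).
Local Notation w := (binw R M).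

(* Uninvolved bidders receive their mean CTR, which is always calibrated. *)
Definition mid (k : 'I_n) : R := (r k + r' k) / 2.

Definition signal (p q : 'I_n) (m : nat) : {ffun 'I_n -> R} :=
  [ffun k => if k == p then u m.+1 else if k == q then u m else mid k].

Definition rung (ρ : {ffun 'I_n -> R}) (p q : 'I_n) (m : nat) : atom R n :=
  (w m, (ρ, signal p q m)).

Definition ladder : seq (atom R n) :=
  [seq rung r i j m | m <- index_iota 0 M.+1]
  ++ [seq rung r' j i m | m <- index_iota 0 M.+1].

Lemma sum_ladder (P : pred (atom R n)) (F : atom R n -> R) :
  \sum_(x <- ladder | P x) F x =
  \sum_(m < M.+1) ((if P (rung r i j m) then F (rung r i j m) else 0)
                   + (if P (rung r' j i m) then F (rung r' j i m) else 0)).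
Proof.
rewrite big_cat !big_map big_split; congr (_ + _).
  all: by rewrite [LHS]big_mkcond; apply: big_mkord.
Qed.

Lemma mem_ladder x : x \in ladder ->
  exists2 m, (m <= M)%N & x = rung r i j m \/ x = rung r' j i m.
Proof.
rewrite mem_cat => /orP [] /mapP [m];
  rewrite mem_index_iota ltnS => /andP [_ mM] ->; exists m => //; by [left | right].
Qed.

Lemma signal_hi p q m : signal p q m p = u m.+1.
Proof. by rewrite ffunE eqxx. Qed.

Lemma signal_lo p q m : q != p -> signal p q m q = u m.
Proof. by move=> qp; rewrite ffunE (negbTE qp) eqxx. Qed.

Lemma signal_mid p q m k : k != p -> k != q -> signal p q m k = mid k.
Proof. by move=> kp kq; rewrite ffunE (negbTE kp) (negbTE kq). Qed.

Lemma b_ge0 : 0 <= b.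
Proof. by rewrite -rj; case/andP: (r01 j). Qed.

Lemma a_le1 : a <= 1.
Proof. by rewrite -ri; case/andP: (r01 i). Qed.

Lemma mid_le_b k : k != i -> k != j -> mid k <= b.
Proof. by move=> ki kj; have [rk r'k] := others ki kj; rewrite /mid; lra. Qed.

Lemma signal_in01 p q m : (m <= M)%N -> in01 (signal p q m).
Proof.
move=> mM k; rewrite ffunE.
have grid01 l : (l <= M.+1)%N -> 0 <= u l <= 1.
  move=> lM; rewrite (le_trans b_ge0 (grid_ge_bot _ ba _)).
  by rewrite (le_trans (grid_le_top ba lM) a_le1).
case: ifP => _; first exact: grid01.
case: ifP => _; first by apply: grid01; rewrite leqW.
have /andP [r0 r1] := r01 k; have /andP [r'0 r'1] := r'01 k.
by rewrite /mid; apply/andP; split; lra.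
Qed.

Lemma rev_signal v ρ p q m : 0 <= v -> p != q ->
  (forall l, l != p -> l != q -> mid l <= b) ->
  rev_given (fun _ => v) ρ (signal p q m) = ρ p * (v * u m / u m.+1).
Proof.
move=> v0 pq mid_b.
rewrite (rev_given_top _ v0 pq) ?signal_hi ?signal_lo 1?eq_sym //.
- exact: le_trans b_ge0 (grid_ge_bot _ ba _).
- exact: grid_lt.
- move=> l lp lq; rewrite signal_mid //.
  exact: le_trans (mid_b l lp lq) (grid_ge_bot _ ba _).
Qed.

Lemma ladder_weight_gt0 x : x \in ladder -> 0 < weight x.
Proof. by case/mem_ladder => m mM [] ->; exact: binw_gt0. Qed.

Lemma ladder_info_struct : is_info_struct (unif2 r r') ladder.
Proof.
split.
- by move=> x /mem_ladder [m mM [] ->]; split;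
    rewrite /weight /ctr /sig /= ?binw_gt0 //; apply: signal_in01.
- by rewrite sum_ladder big_split /= sum_binw; field.
- move=> y; rewrite sum_ladder big_split /= /unif2 (eq_sym y r) (eq_sym y r').
  by congr (_ + _); case: eqP; rewrite ?sum_binw ?big1.
Qed.

Lemma ladder_calibrated : calibrated ladder.
Proof.
move=> k t pos; have ji : j != i by rewrite eq_sym.
apply: condE_sk_fixed pos; rewrite sum_ladder /weight /ctr /sig /=.
have [-> | ki] := eqVneq k i.
  rewrite -[RHS](grid_martingale a b M t); apply: eq_bigr => m _.
  by rewrite signal_hi (signal_lo _ ij) ri r'i.
have [-> | kj] := eqVneq k j.
  rewrite -[RHS](grid_martingale a b M t); apply: eq_bigr => m _.
  by rewrite signal_hi (signal_lo _ ji) rj r'j addrC.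
apply: big1 => m _; rewrite !signal_mid //.
by case: ifP => _; [rewrite /mid; field | rewrite addr0].
Qed.

(* Correlation: at the top rung of profile r, the signal of i reveals the
   profile, so E[r_j | s] = b while E[r_j | s_j] = u_M > b. *)
Lemma ladder_correlated : (0 < M)%N -> correlated ladder.
Proof.
move=> M_gt0 indep; set σ := signal i j M.
have top_in : rung r i j M \in ladder.
  by rewrite mem_cat map_f ?mem_index_iota ?leq0n /=.
have σ_mass : forall P : pred (atom R n), P (rung r i j M) ->
    0 < \sum_(x <- ladder | P x) weight x.
  by move=> P; apply: cond_mass_gt0 ladder_weight_gt0 top_in.
have only_r x : x \in ladder -> sig x = σ -> ctr x j = b.
  case/mem_ladder => m mM [] ->; rewrite /ctr /sig /= => sx //.
  have := congr1 (fun f : {ffun 'I_n -> R} => f i) sx.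
  rewrite (signal_lo _ ij) signal_hi => u_eq.
  by have := grid_lt M ba (leq_ltn_trans mM (ltnSn M)); rewrite u_eq ltxx.
have σ_supp : in_support ladder σ by apply/hasP; exists (rung r i j M).
have := indep j σ σ_supp.
rewrite (condE_s_const only_r) ?σ_mass // ladder_calibrated ?σ_mass //.
rewrite /σ signal_lo 1?eq_sym // => b_eq.
by have := grid_lt M ba M_gt0; rewrite grid0 -b_eq ltxx.
Qed.

Lemma ladder_revenue v : 0 <= v ->
  revenue (fun _ => v) ladder = 2 * (a * v) * \sum_(m < M.+1) w m * (u m / u m.+1).
Proof.
move=> v0; rewrite /revenue sum_ladder mulr_sumr; apply: eq_bigr => m _ /=.
rewrite !rev_signal //.
- by rewrite /ctr /= ri r'j; ring.
- by rewrite eq_sym.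
- by move=> l lj li; exact: mid_le_b.
- exact: mid_le_b.
Qed.

End Ladder.

Lemma surplus_within_eps (R : realFieldType) (a v eps S N : R) :
  0 <= a <= 1 -> 0 <= v -> 0 < N -> 2 * v <= eps * N -> 1 / 2 - 1 / N <= S ->
  a * v - eps <= 2 * (a * v) * S.
Proof.
move=> /andP [a0 a1] v0 N0 vN S_ge.
have av_le : 0 <= a * v <= v by rewrite mulr_ge0 //=; nra.
apply: le_trans (ler_wpM2l _ S_ge); last by nra.
have -> : 2 * (a * v) * (1 / 2 - 1 / N) = a * v - 2 * (a * v) / N.
  by field; rewrite gt_eqF.
by rewrite lerB // ler_pdivrMr //; nra.
Qed.

Theorem mainTheorem5 (R : realType) (n : nat) (v : R)
    (r r' : {ffun 'I_n -> R}) (i j : 'I_n) :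
  (2 <= n)%N -> 0 <= v -> in01 r -> in01 r' -> i != j ->
  r i = r' j -> r j < r' j -> r j = r' i ->
  (forall k : 'I_n, k != i -> k != j -> r k <= r' i /\ r' k <= r' i) ->
  forall eps : R, 0 < eps ->
    exists I : seq (atom R n),
      [/\ is_info_struct (unif2 r r') I, calibrated I, correlated I
        & v * r i - eps <= revenue (fun _ => v) I].
Proof.
move=> _ v0 r01 r'01 ij ri_r'j rj_lt rj_r'i others eps eps_gt0.
have r'j : r' j = r i by rewrite ri_r'j.
have r'i : r' i = r j by rewrite rj_r'i.
have ba : r j < r i by rewrite ri_r'j.
have others' k : k != i -> k != j -> r k <= r j /\ r' k <= r j.
  by rewrite rj_r'i; exact: others.
pose K := Num.Def.archi_bound (2 * v / eps); pose M := K.+1.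
have M_large : 2 * v <= eps * M.+1%:R.
  have := archi_boundP (divr_ge0 (mulr_ge0 (ler0n R 2) v0) (ltW eps_gt0)).
  rewrite ltr_pdivrMr // => /ltW /le_trans; apply.
  by rewrite [eps * _]mulrC ler_pM2r // ler_nat (leqW (leqnSn K)).
exists (ladder i j r r' (r i) (r j) M); split.
- exact: ladder_info_struct.
- exact: ladder_calibrated.
- exact: ladder_correlated.
- have b0 : 0 <= r j by case/andP: (r01 j).
  rewrite ladder_revenue // mulrC; apply: (surplus_within_eps (N := M.+1%:R)) => //.
  exact: expected_grid_ratio b0 ba.
Qed.
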